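(* Let $K$ be a valued field with value group $\Gamma$, let $L$ be an immediate valued field extension of $K$, let $a\in L\setminus K$, and let $(a_\rho)$ be a pseudocauchy sequence in $K$ of transcendental type over $K$ with $a_\rho\leadsto a$. Put $\gamma_\rho=v(a-a_\rho)$. Let $R(X)\in K(X)\setminus K$. Then there is an index $\rho_0$ such that for $\rho>\rho_0$: (1) $R(a_\rho)$ is defined and lies in $K$; (2) $R(a_\rho)\leadsto R(a)$; (3) there are $\alpha\in\Gamma$ and $i\ge1$ such that eventually $v(R(a_\rho)-R(a))=\alpha+i\gamma_\rho$; (4) with $\alpha,i$ as in (3), $(\alpha+i\gamma_\rho)$ is eventually cofinal in $v(R(a)-K)$; (5) $(R(a_\rho))$ is a divergent pseudocauchy sequence in $K$; (6) with $\alpha,i$ as in (3), $v(R(a)-K)=(\alpha+i\,v(a-K))^{\downarrow}$.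
   Context: For a valued field $K$ with valuation $v:K\to\Gamma\cup\{\infty\}$, write $f\prec g$ iff $vf>vg$. A well-indexed sequence is one indexed by an infinite well-ordered set without greatest element. A well-indexed sequence $(a_\rho)$ pseudoconverges to $a$ (written $a_\rho\leadsto a$) if for some $\rho_0$, $a-a_\sigma\prec a-a_\rho$ whenever $\sigma>\rho>\rho_0$. $(a_\rho)$ is a pseudocauchy sequence if for some $\rho_0$, $a_\tau-a_\sigma\prec a_\sigma-a_\rho$ whenever $\tau>\sigma>\rho>\rho_0$; it is divergent in $K$ if it has no pseudolimit in $K$; it is of transcendental type over $K$ if for every nonconstant $P\in K[X]$, $v(P(a_\rho))$ is eventually constant. An immediate extension has the same value group and residue field. For $b\in L$, $v(b-K)=\{v(b-c):c\in K\}$; for $A\subseteq\Gamma$, $A^{\downarrow}=\{\delta\in\Gamma:\delta\le\sigma\text{ for some }\sigma\in A\}$, and $\alpha+iA=\{\alpha+i\sigma:\sigma\in A\}$. *)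

From HB Require Import structures.
From mathcomp Require Import all_boot all_order all_algebra.
Set Implicit Arguments. Unset Strict Implicit. Unset Printing Implicit Defensive.
Import Order.TTheory GRing.Theory Num.Theory.
Local Open Scope ring_scope.

Definition ordered_abgroup (G : porderZmodType) : Prop :=
  (forall x y : G, ((x <= y)%O || (y <= x)%O)) /\
  (forall x y z : G, (x <= y)%O -> (x + z <= y + z)%O).

Section ValuedFields.
Context {G : porderZmodType}.

(* Gamma ∪ {oo} is modelled by option G, with None = oo. *)
Definition vle (x y : option G) : bool :=
  match x, y with
  | _, None => true
  | None, Some _ => false
  | Some a, Some b => (a <= b)%O
  end.
Definition vlt (x y : option G) : bool := ~~ vle y x.
Definition vadd (x y : option G) : option G :=
  match x, y with Some a, Some b => Some (a + b) | _, _ => None end.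
Definition vmin (x y : option G) : option G := if vle x y then x else y.
Definition vnatmul (x : option G) (n : nat) : option G := omap (fun a => a *+ n) x.

Definition is_valuation (F : fieldType) (v : F -> option G) : Prop :=
  [/\ forall x, v x = None <-> x = 0,
      forall x y, v (x * y) = vadd (v x) (v y) &
      forall x y, vle (vmin (v x) (v y)) (v (x + y))].

Definition has_value_group (F : fieldType) (v : F -> option G) : Prop :=
  forall g : G, exists x, v x = Some g.

(* (L, vL) is an immediate valued field extension of (K, vK) via iota:
   vL extends vK, same value group, same residue field. *)
Definition immediate_ext (K L : fieldType) (iota : {rmorphism K -> L})
    (vK : K -> option G) (vL : L -> option G) : Prop :=
  [/\ forall x, vL (iota x) = vK x,
      forall y, y != 0 -> exists x, vL y = vK x &
      forall y, vle (Some 0) (vL y) -> exists x, vlt (Some 0) (vL (y - iota x))].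

Definition vprec (F : fieldType) (v : F -> option G) (f g : F) : bool :=
  vlt (v g) (v f).

Section Sequences.
Context {dI : Order.disp_t} {I : orderType dI}.

Definition pseudoconv (F : fieldType) (v : F -> option G) (s : I -> F) (a : F) : Prop :=
  exists r0 : I, forall r t : I, (r0 < r)%O -> (r < t)%O ->
    vprec v (a - s t) (a - s r).

Definition pseudocauchy (F : fieldType) (v : F -> option G) (s : I -> F) : Prop :=
  exists r0 : I, forall r t u : I, (r0 < r)%O -> (r < t)%O -> (t < u)%O ->
    vprec v (s u - s t) (s t - s r).

Definition divergent (F : fieldType) (v : F -> option G) (s : I -> F) : Prop :=
  ~ exists a : F, pseudoconv v s a.

Definition transc_type (K : fieldType) (v : K -> option G) (s : I -> K) : Prop :=
  forall P : {poly K}, (1 < size P)%N ->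
    exists (r0 : I) (g : option G), forall r : I, (r0 < r)%O -> v P.[s r] = g.

End Sequences.
End ValuedFields.

Definition well_indexed (dI : Order.disp_t) (I : orderType dI) : Prop :=
  [/\ inhabited I, forall i : I, exists j : I, (i < j)%O &
      well_founded (fun i j : I => (i < j)%O)].

From mathcomp Require Import all_boot all_order all_algebra.
From Stdlib Require Import Classical.
From mathcomp Require Import ring.
Import Order.TTheory GRing.Theory.
Local Open Scope ring_scope.

(* Write gamma_r = v(a - a_r); it is eventually strictly increasing. Expanding a
   polynomial H around a, v(H(a_r)) is eventually the value b + i gamma_r of a
   single dominant monomial, with i >= 1 when H(a) = 0.  For R = p/q this is
   applied to H = q(a) p - p(a) q, which vanishes at a and is nonzero because R
   is not constant, giving v(R(a) - R(a_r)) = alpha + i gamma_r.  The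
   transcendental type of (a_r) makes v(R(a_r) - c) eventually constant for
   every c in K, so v(R(a) - c) cannot stay above alpha + i gamma_r: this gives
   the cofinality, the divergence of (R(a_r)), and, since v(K^x) is the whole
   value group, the description of v(R(a) - K). *)

Section OrderedAbGroup.
Context {G : porderZmodType}.
Hypothesis HG : ordered_abgroup G.
Implicit Types x y z : G.

Lemma og_ltNge x y : (x < y)%O = ~~ (y <= x)%O.
Proof.
case Hyx: (y <= x)%O; first by rewrite le_gtF.
have Hxy : (x <= y)%O by case/orP: (proj1 HG x y) => //; rewrite Hyx.
by rewrite lt_neqAle Hxy andbT; apply: contraFN Hyx => /eqP ->.
Qed.

Lemma og_leNgt x y : (x <= y)%O = ~~ (y < x)%O.
Proof. by rewrite og_ltNge negbK. Qed.

Lemma og_lerD2l z {x y} : (x <= y)%O -> (z + x <= z + y)%O.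
Proof. by rewrite ![z + _]addrC; apply: (proj2 HG). Qed.

Lemma og_ltrD2l z {x y} : (x < y)%O -> (z + x < z + y)%O.
Proof. by rewrite !og_ltNge; apply: contra => /(og_lerD2l (- z)); rewrite !addKr. Qed.

Lemma og_lerMn n {x y} : (x <= y)%O -> (x *+ n <= y *+ n)%O.
Proof.
move=> le_xy; elim: n => [|n IH]; first by rewrite !mulr0n.
rewrite !mulrSr; apply: (le_trans (y := y *+ n + x)); last exact: og_lerD2l.
by rewrite ![_ + x]addrC; apply: og_lerD2l.
Qed.

Lemma og_ltrMn n {x y} : (0 < n)%N -> (x < y)%O -> (x *+ n < y *+ n)%O.
Proof.
case: n => // n _ lt_xy; rewrite !mulrSr.
apply: (lt_le_trans (y := x *+ n + y)); first exact: og_ltrD2l.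
by rewrite ![_ + y]addrC; apply/og_lerD2l/og_lerMn/ltW.
Qed.

Lemma og_addxx_eq0 x : x + x = 0 -> x = 0.
Proof.
move=> xx0; apply/eqP; rewrite eq_le !og_leNgt.
by apply/andP; split; apply/negP => /(og_ltrMn 2 isT);
  rewrite mul0rn mulr2n xx0 ltxx.
Qed.

End OrderedAbGroup.

Section ExtendedOrder.
Context {G : porderZmodType}.
Implicit Types x y : option G.

Lemma vltxx x : vlt x x = false.
Proof. by case: x => [g|] //=; rewrite /vlt /= lexx. Qed.

Lemma vle_anti {x y} : vle x y -> vle y x -> x = y.
Proof.
case: x => [g|]; case: y => [h|] //= le_gh le_hg.
by rewrite (@le_anti _ _ g h) // le_gh le_hg.
Qed.

Hypothesis HG : ordered_abgroup G.

Lemma vlt_Some (g h : G) : vlt (Some g) (Some h) = (g < h)%O.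
Proof. by rewrite /vlt /= (og_ltNge HG). Qed.

Lemma vle_total x y : vle x y || vle y x.
Proof. by case: x; case: y => //= g h; apply: (proj1 HG). Qed.

Lemma vltW {x y} : vlt x y -> vle x y.
Proof. by rewrite /vlt; case/orP: (vle_total x y) => ->. Qed.

End ExtendedOrder.

Section Valuation.
Context {G : porderZmodType} {F : fieldType} {v : F -> option G}.
Hypotheses (HG : ordered_abgroup G) (Hv : is_valuation v).

Lemma val_eq0 x : (v x == None) = (x == 0).
Proof. by case: Hv => H _ _; apply/eqP/eqP => /H. Qed.

Lemma val0 : v 0 = None.
Proof. by apply/eqP; rewrite val_eq0. Qed.

Lemma val_Some {x} : x != 0 -> exists g, v x = Some g.
Proof. by rewrite -val_eq0; case: (v x) => // g; exists g. Qed.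

Lemma valM x y : v (x * y) = vadd (v x) (v y).
Proof. by case: Hv. Qed.

Lemma valD x y : vle (vmin (v x) (v y)) (v (x + y)).
Proof. by case: Hv. Qed.

Lemma val1 : v 1 = Some 0.
Proof.
have [g vg] := val_Some (oner_neq0 F).
have := valM 1 1; rewrite mulr1 vg => -[gg].
by congr Some; apply: (addrI g); rewrite addr0 -gg.
Qed.

Lemma valN x : v (- x) = v x.
Proof.
have [g vg] : exists g, v (-1) = Some g.
  by apply: val_Some; rewrite oppr_eq0 oner_neq0.
have g0 : g = 0.
  apply: (og_addxx_eq0 HG).
  by have := valM (-1) (-1); rewrite mulrNN mulr1 val1 vg => -[].
by rewrite -mulN1r valM vg g0; case: (v x) => //= h; rewrite add0r.
Qed.

Lemma val_subC x y : v (x - y) = v (y - x).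
Proof. by rewrite -valN opprB. Qed.

Lemma valV {x g} : v x = Some g -> v x^-1 = Some (- g).
Proof.
move=> vx; have x0 : x != 0 by rewrite -val_eq0 vx.
have [h vxV] : exists h, v x^-1 = Some h by apply: val_Some; rewrite invr_eq0.
have := valM x x^-1; rewrite mulfV // val1 vx vxV => -[gh].
by congr Some; apply: (addrI g); rewrite subrr -gh.
Qed.

Lemma valD_lt x y : vlt (v x) (v y) -> v (x + y) = v x.
Proof.
move=> lt_xy; have := valD x y; rewrite /vmin (vltW HG lt_xy) => le_x_xy.
have := valD (x + y) (- y); rewrite addrK valN /vmin.
case: ifP => [_ le_xy_x|_ le_yx]; first exact: vle_anti.
by rewrite /vlt le_yx in lt_xy.
Qed.

Lemma valD_neq x y : v x <> v y -> v (x + y) = vmin (v x) (v y).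
Proof.
move=> neq; rewrite /vmin; case: ifP => [le_xy|le_yx].
  by apply: valD_lt; rewrite /vlt; apply: contra_notN neq => /(vle_anti le_xy).
by rewrite addrC valD_lt // /vlt le_yx.
Qed.

End Valuation.

Section Eventually.
Context {dI : Order.disp_t} {I : orderType dI}.
Implicit Types P Q : I -> Prop.

Definition eventually P : Prop := exists r0, forall r, (r0 < r)%O -> P r.
Definition frequently P : Prop := forall r0, exists r, (r0 < r)%O /\ P r.

Lemma eventually_and {P Q} :
  eventually P -> eventually Q -> eventually (fun r => P r /\ Q r).
Proof.
move=> [r1 HP] [r2 HQ]; exists (Order.max r1 r2) => r.
by rewrite gt_max => /andP [lt1 lt2]; split; [apply: HP | apply: HQ].
Qed.

Lemma not_frequently {P} : ~ frequently P -> eventually (fun r => ~ P r).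
Proof.
move=> /not_all_ex_not [r0 Hr0]; exists r0 => r lt_r0r Pr.
by apply: Hr0; exists r.
Qed.

Definition eventually_increasing {G : porderZmodType} (h : I -> G) : Prop :=
  eventually (fun r => forall t, (r < t)%O -> (h r < h t)%O).

Lemma eventually_increasing_affine {G : porderZmodType} (HG : ordered_abgroup G)
    (b : G) {i : nat} {h : I -> G} :
  (0 < i)%N -> eventually_increasing h ->
  eventually_increasing (fun r => b + h r *+ i).
Proof.
move=> i_gt0 [r0 inc]; exists r0 => r lt_r0r t lt_rt.
exact/(og_ltrD2l HG)/(og_ltrMn HG _ i_gt0)/inc.
Qed.

Hypothesis HI : forall r : I, exists t, (r < t)%O.

Lemma eventually_vlt_nonconst {G : porderZmodType} {f : I -> option G} {g} :
  eventually (fun r => forall t, (r < t)%O -> vlt (f r) (f t)) ->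
  ~ eventually (fun r => f r = g).
Proof.
move=> inc const; have [r0 H] := eventually_and inc const.
have [r lt_r0r] := HI r0; have [t lt_rt] := HI r.
have := (H r lt_r0r).1 t lt_rt.
by rewrite (H r lt_r0r).2 (H t (lt_trans lt_r0r lt_rt)).2 vltxx.
Qed.

Lemma eventually_increasing_nonconst {G : porderZmodType} (HG : ordered_abgroup G)
    {h : I -> G} {f : I -> option G} {g} :
  eventually_increasing h -> eventually (fun r => f r = Some (h r)) ->
  ~ eventually (fun r => f r = g).
Proof.
move=> inc fh; apply: eventually_vlt_nonconst.
have [r0 H] := eventually_and inc fh; exists r0 => r lt_r0r t lt_rt.
rewrite (H r lt_r0r).2 (H t (lt_trans lt_r0r lt_rt)).2 (vlt_Some HG).
exact: (H r lt_r0r).1.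
Qed.

End Eventually.

Section EventualValues.
Context {G : porderZmodType} {L : fieldType} {vL : L -> option G}
  {dI : Order.disp_t} {I : orderType dI}.
Hypotheses (HG : ordered_abgroup G) (HvL : is_valuation vL).

Lemma val_horner_affine {d : I -> L} {h : I -> G} {T : {poly L}} :
  eventually (fun r => vL (d r) = Some (h r)) -> eventually_increasing h ->
  T != 0 -> exists (b : G) (i : nat), (T`_0 = 0 -> (0 < i)%N) /\
    eventually (fun r => vL T.[d r] = Some (b + h r *+ i)).
Proof.
move=> Hd Hh; elim/poly_ind: T => [|T c IH]; first by rewrite eqxx.
rewrite coefD coefMX coefC /= add0r => nzTc.
have [T0 | nzT] := eqVneq T 0.
  move: nzTc; rewrite T0 mul0r add0r polyC_eq0 => nzc.
  have [gc vc] := val_Some HvL nzc.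
  exists gc, 0%N; split => [c0|]; first by rewrite c0 eqxx in nzc.
  by case: Hd => r0 _; exists r0 => r _; rewrite hornerC mulr0n addr0.
have [b [i [_ HT]]] := IH nzT.
pose k r := b + h r *+ i.+1.
have HTX : eventually (fun r => vL (T.[d r] * d r) = Some (k r)).
  have [r0 H] := eventually_and HT Hd; exists r0 => r /H [vT vd].
  by rewrite (valM HvL) vT vd /k mulrSr addrA.
have [c0 | nzc] := eqVneq c 0.
  exists b, i.+1; split => //.
  by case: HTX => r0 H; exists r0 => r /H; rewrite hornerMXaddC c0 addr0.
have [gc vc] := val_Some HvL nzc.
(* As k increases, either v c is eventually below k (the constant term
   dominates) or eventually above it. *)
case: (classic (frequently (fun r => (gc <= k r)%O))) => [freq | /not_frequently Hlt].
  have Hk : eventually_increasing k.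
    exact: (eventually_increasing_affine HG b (i := i.+1) isT Hh).
  have [r0 H] := eventually_and HTX Hk; have [r1 [lt_r0r1 le_gc]] := freq r0.
  exists gc, 0%N; split => [c0|]; first by rewrite c0 eqxx in nzc.
  exists r1 => r lt_r1r.
  rewrite hornerMXaddC mulr0n addr0 addrC (valD_lt HG HvL) vc //.
  rewrite (H r (lt_trans lt_r0r1 lt_r1r)).1 (vlt_Some HG).
  exact: le_lt_trans le_gc ((H r1 lt_r0r1).2 r lt_r1r).
exists b, i.+1; split => //.
have [r0 H] := eventually_and HTX Hlt; exists r0 => r /H [vTX nle].
rewrite hornerMXaddC (valD_lt HG HvL) vTX // vc (vlt_Some HG) (og_ltNge HG).
exact/negP.
Qed.

Hypothesis HI : forall r : I, exists t, (r < t)%O.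

Lemma eventual_val_pseudolimit {x : I -> L} {y : L} {h : I -> G} {g : option G} :
  eventually_increasing h -> eventually (fun r => vL (x r - y) = Some (h r)) ->
  eventually (fun r => vL (x r) = g) -> exists w, vL y = Some w /\ g = Some w.
Proof.
move=> inc Hxy [r0 Hx].
have nonconst g' : ~ eventually (fun r => vL (x r - y) = g').
  exact: (eventually_increasing_nonconst HI HG inc Hxy).
(* Otherwise v(x_r - y) would eventually be the constant min(g, v y). *)
have vy : vL y = g.
  apply: NNPP => neq; apply: (nonconst (vmin g (vL y))); exists r0 => r lt_r0r.
  by rewrite (valD_neq HG HvL) (valN HG HvL) Hx // => /esym.
case: g Hx vy => [w|] Hx vy; first by exists w.
case: (nonconst None); exists r0 => r lt_r0r.
move/eqP: (Hx r lt_r0r) vy; rewrite (val_eq0 HvL) => /eqP ->.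
by move/eqP; rewrite (val_eq0 HvL) => /eqP ->; rewrite subr0 (val0 HvL).
Qed.

End EventualValues.

Lemma proportional_map_poly (F E : fieldType) (iota : {rmorphism F -> E})
    (p q : {poly F}) (x y : E) :
  q != 0 -> y != 0 -> y *: map_poly iota p = x *: map_poly iota q ->
  exists c, p = c *: q.
Proof.
move=> nzq nzy Epq; set k := (size q).-1.
have Ecoef j : y * iota p`_j = x * iota q`_j.
  by have := congr1 (fun P : {poly E} => P`_j) Epq; rewrite /= !coefZ !coef_map.
have iqk : iota q`_k != 0 by rewrite fmorph_eq0 -/(lead_coef q) lead_coef_eq0.
exists (p`_k / q`_k); apply/polyP => j; rewrite coefZ.
apply: (fmorph_inj iota); rewrite rmorphM fmorph_div; apply: (mulfI nzy).
by rewrite !mulrA !Ecoef mulfK.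
Qed.

Section PseudoLimits.
Context {G : porderZmodType} {K L : fieldType} {vK : K -> option G}
  {vL : L -> option G} {iota : {rmorphism K -> L}} {dI : Order.disp_t}
  {I : orderType dI}.
Hypotheses (HG : ordered_abgroup G) (HvK : is_valuation vK) (HvL : is_valuation vL).
Hypothesis Hvi : forall x, vL (iota x) = vK x.

Lemma val_sub_downward (b : L) (c : K) (g g' : G) :
  has_value_group vK -> vL (b - iota c) = Some g' -> (g < g')%O ->
  exists c', vL (b - iota c') = Some g.
Proof.
move=> HvG vbc lt_gg'; have [x vx] := HvG g; exists (c + x).
rewrite rmorphD (_ : _ - _ = - iota x + (b - iota c)); last by ring.
have vix : vL (- iota x) = Some g by rewrite (valN HG HvL) Hvi.
by rewrite (valD_lt HG HvL) vix // vbc (vlt_Some HG).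
Qed.

Context {b : L} {f : I -> K} {h : I -> G}.
Hypothesis Hh : eventually_increasing h.
Hypothesis Hbf : eventually (fun r => vL (b - iota (f r)) = Some (h r)).

Lemma pseudoconv_of_val : pseudoconv vL (fun r => iota (f r)) b.
Proof.
have [r0 H] := eventually_and Hbf Hh; exists r0 => r t lt_r0r lt_rt.
rewrite /vprec (H r lt_r0r).1 (H t (lt_trans lt_r0r lt_rt)).1 (vlt_Some HG).
exact: (H r lt_r0r).2.
Qed.

Lemma val_sub_pseudo :
  eventually (fun r => forall t, (r < t)%O -> vK (f t - f r) = Some (h r)).
Proof.
have [r0 H] := eventually_and Hbf Hh; exists r0 => r lt_r0r t lt_rt.
have [vr inc] := H r lt_r0r; have vt := (H t (lt_trans lt_r0r lt_rt)).1.
have lt_vr_vt : vlt (vL (b - iota (f r))) (vL (- (b - iota (f t)))).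
  by rewrite (valN HG HvL) vr vt (vlt_Some HG) inc.
rewrite -Hvi rmorphB (_ : _ - _ = (b - iota (f r)) + - (b - iota (f t))).
  by rewrite (valD_lt HG HvL).
by ring.
Qed.

Lemma pseudocauchy_of_val : pseudocauchy vK f.
Proof.
have [r0 H] := eventually_and val_sub_pseudo Hh.
exists r0 => r t u lt_r0r lt_rt lt_tu.
rewrite /vprec (H r lt_r0r).1 // (H t (lt_trans lt_r0r lt_rt)).1 // (vlt_Some HG).
exact: (H r lt_r0r).2.
Qed.

Hypothesis HI : forall r : I, exists t, (r < t)%O.
Hypothesis Hconst : forall c, exists g, eventually (fun r => vK (f r - c) = g).

Lemma frequently_val_sub_le (c : K) :
  frequently (fun r => vle (vL (b - iota c)) (Some (h r))).
Proof.
apply: NNPP => /not_frequently Hgt; have [g Hg] := Hconst c.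
apply: (eventually_increasing_nonconst HI HG Hh _ Hg).
have [r0 H] := eventually_and Hbf Hgt; exists r0 => r /H [vbf nle].
have lt_bf_bc : vlt (vL (- (b - iota (f r)))) (vL (b - iota c)).
  by rewrite (valN HG HvL) vbf /vlt; apply/negP.
rewrite -Hvi rmorphB (_ : _ - _ = - (b - iota (f r)) + (b - iota c)); last by ring.
by rewrite (valD_lt HG HvL) // (valN HG HvL).
Qed.

Lemma divergent_of_val : divergent vK f.
Proof.
move=> [c [r0 conv]]; have [g [r1 Hg]] := Hconst c.
apply: (eventually_vlt_nonconst HI (f := fun r => vK (c - f r)) (g := g)).
  by exists r0 => r lt_r0r t; apply: conv.
by exists r1 => r /Hg; rewrite (val_subC HG HvK).
Qed.

End PseudoLimits.

Section TranscendentalPseudolimit.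
Context {G : porderZmodType} {K L : fieldType} {vK : K -> option G}
  {vL : L -> option G} {iota : {rmorphism K -> L}} {dI : Order.disp_t}
  {I : orderType dI}.
Hypotheses (HG : ordered_abgroup G) (HvK : is_valuation vK) (HvL : is_valuation vL).
Hypothesis Hvi : forall x, vL (iota x) = vK x.
Hypothesis HI : forall r : I, exists t, (r < t)%O.
Context {a : L} {s : I -> K}.
Hypothesis Ha : ~ exists x, a = iota x.
Hypothesis Htr : transc_type vK s.
Hypothesis Hpc : pseudoconv vL (fun r => iota (s r)) a.

Definition gamma r : G := odflt 0 (vL (a - iota (s r))).

Lemma val_a_sub r : vL (a - iota (s r)) = Some (gamma r).
Proof.
rewrite /gamma; case E: (vL _) => [g|] //=; case: Ha; exists (s r).
by apply/eqP; rewrite -subr_eq0 -(val_eq0 HvL) E.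
Qed.

Lemma gamma_increasing : eventually_increasing gamma.
Proof.
have [r0 H] := Hpc; exists r0 => r lt_r0r t lt_rt.
by have := H r t lt_r0r lt_rt; rewrite /vprec !val_a_sub (vlt_Some HG).
Qed.

Lemma eventually_const_val_horner (P : {poly K}) :
  exists g, eventually (fun r => vK P.[s r] = g).
Proof.
case: (leqP (size P) 1) => [/size1_polyC -> | /Htr [r0 [g H]]]; last by exists g, r0.
by have [r0 _] := Hpc; exists (vK P`_0), r0 => r _; rewrite hornerC.
Qed.

Lemma val_horner_root {H : {poly L}} : H != 0 -> root H a ->
  exists (b : G) (i : nat), (0 < i)%N /\
    eventually (fun r => vL H.[iota (s r)] = Some (b + gamma r *+ i)).
Proof.
move=> nzH /rootP Ha0; pose T := H \Po ('X + a%:P).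
have nzT : T != 0.
  by rewrite -size_poly_eq0 size_comp_poly2 ?size_XaddC // size_poly_eq0.
have Hd : eventually (fun r => vL (iota (s r) - a) = Some (gamma r)).
  by have [r0 _] := Hpc; exists r0 => r _; rewrite (val_subC HG HvL) val_a_sub.
have [b [i [Hi [r0 HT]]]] := val_horner_affine HG HvL Hd gamma_increasing nzT.
exists b, i; split.
  by apply: Hi; rewrite -horner_coef0 horner_comp !hornerE.
by exists r0 => r /HT; rewrite horner_comp !hornerE subrK.
Qed.

Lemma val_horner_a {P : {poly K}} : P != 0 -> exists w,
  vL (map_poly iota P).[a] = Some w /\ eventually (fun r => vK P.[s r] = Some w).
Proof.
move=> nzP; case: (leqP (size P) 1) => [/size1_polyC EP | sizeP].
  have [w vw] : exists w, vK P`_0 = Some w.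
    by apply: (val_Some HvK); rewrite -polyC_eq0 -EP.
  exists w; rewrite EP map_polyC hornerC Hvi; split=> //.
  by have [r0 _] := Hpc; exists r0 => r _; rewrite hornerC.
set Pa := (map_poly iota P).[a].
have nzH : map_poly iota P - Pa%:P != 0.
  apply: contraTneq sizeP => /subr0_eq EP.
  by rewrite -leqNgt -(size_map_poly iota) EP size_polyC leq_b1.
have rootH : root (map_poly iota P - Pa%:P) a by rewrite /root !hornerE subrr.
have [b [i [i_gt0 [r0 HP]]]] := val_horner_root nzH rootH.
have HPs : eventually (fun r => vL (iota P.[s r] - Pa) = Some (b + gamma r *+ i)).
  by exists r0 => r /HP; rewrite hornerD hornerN hornerC horner_map.
have [g [r1 Hg]] := eventually_const_val_horner P.
have HPi : eventually (fun r => vL (iota P.[s r]) = g).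
  by exists r1 => r /Hg; rewrite Hvi.
have [w [vPa gw]] := eventual_val_pseudolimit HG HvL HI
  (eventually_increasing_affine HG b i_gt0 gamma_increasing) HPs HPi.
by exists w; split=> //; rewrite -gw; exists r1.
Qed.

Context {p q : {poly K}}.
Hypothesis Hq : q != 0.
Hypothesis HnC : ~ exists c, p = c *: q.

Definition R_at_a := (map_poly iota p).[a] / (map_poly iota q).[a].
Definition R_at_s r := p.[s r] / q.[s r].

Lemma horner_q_a_neq0 : (map_poly iota q).[a] != 0.
Proof. by have [w [vw _]] := val_horner_a Hq; rewrite -(val_eq0 HvL) vw. Qed.

Lemma eventually_horner_q_neq0 : eventually (fun r => q.[s r] != 0).
Proof.
have [w [_ [r0 H]]] := val_horner_a Hq.
by exists r0 => r /H vw; rewrite -(val_eq0 HvK) vw.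
Qed.

Lemma val_R_at_a_sub : exists (al : G) (i : nat), (0 < i)%N /\
  eventually (fun r => vL (R_at_a - iota (R_at_s r)) = Some (al + gamma r *+ i)).
Proof.
set pa := (map_poly iota p).[a]; set qa := (map_poly iota q).[a].
have nzqa : qa != 0 := horner_q_a_neq0.
pose H := qa *: map_poly iota p - pa *: map_poly iota q.
have nzH : H != 0.
  by apply: contra_notN HnC => /eqP/subr0_eq; apply: proportional_map_poly.
have rootH : root H a by rewrite /root !hornerE -/pa -/qa mulrC subrr.
have [b [i [i_gt0 [r0 HH]]]] := val_horner_root nzH rootH.
have [w [vqa [r1 Hqs]]] := val_horner_a Hq.
exists (b - (w + w)), i; split=> //; exists (Order.max r0 r1) => r.
rewrite gt_max => /andP [/HH vH /Hqs vq].
have nzqs : iota q.[s r] != 0 by rewrite fmorph_eq0 -(val_eq0 HvK) vq.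
have vden : vL (qa * iota q.[s r]) = Some (w + w) by rewrite (valM HvL) vqa Hvi vq.
have -> : R_at_a - iota (R_at_s r) = - H.[iota (s r)] / (qa * iota q.[s r]).
  rewrite /R_at_a /R_at_s /H !hornerE !horner_map fmorph_div -/pa -/qa.
  by field; apply/andP.
by rewrite (valM HvL) (valN HG HvL) vH (valV HvL vden) /= addrAC.
Qed.

Lemma eventually_const_val_R_at_s_sub (c : K) :
  exists g, eventually (fun r => vK (R_at_s r - c) = g).
Proof.
have [g [r0 Hg]] := eventually_const_val_horner (p - c *: q).
have [w [_ [r1 Hqs]]] := val_horner_a Hq.
exists (vadd g (Some (- w))), (Order.max r0 r1) => r.
rewrite gt_max => /andP [/Hg vpq /Hqs vq].
have nzqs : q.[s r] != 0 by rewrite -(val_eq0 HvK) vq.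
rewrite (_ : _ - c = (p - c *: q).[s r] / q.[s r]).
  by rewrite (valM HvK) vpq (valV HvK vq).
by rewrite /R_at_s !hornerE; field.
Qed.

Lemma eventually_const_val_s_sub (c : K) :
  exists g, eventually (fun r => vK (s r - c) = g).
Proof.
have [g [r0 H]] := eventually_const_val_horner ('X - c%:P).
by exists g, r0 => r /H; rewrite hornerXsubC.
Qed.

Context {al : G} {i : nat}.
Hypothesis i_gt0 : (0 < i)%N.
Hypothesis HRa :
  eventually (fun r => vL (R_at_a - iota (R_at_s r)) = Some (al + gamma r *+ i)).

Lemma val_R_at_a_sub_K (HvG : has_value_group vK) (g : option G) :
  (exists c, vL (R_at_a - iota c) = g) <->
  (exists g', g = Some g') /\
  exists c, vle g (vadd (Some al) (vnatmul (vL (a - iota c)) i)).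
Proof.
have inc := eventually_increasing_affine HG al i_gt0 gamma_increasing.
have [r0 HR] := HRa.
split=> [[c <-] | [[g' ->] [c le_g]]].
  have [r [_ le_c]] := frequently_val_sub_le HG HvL Hvi inc HRa HI
    eventually_const_val_R_at_s_sub c r0.
  split; last by exists (s r); rewrite val_a_sub.
  by move: le_c; case: (vL _) => [g'|] // _; exists g'.
have [e ve] : exists e, vL (a - iota c) = Some e.
  by apply: (val_Some HvL); rewrite subr_eq0; apply/eqP => ac; apply: Ha; exists c.
have Has : eventually (fun r => vL (a - iota (s r)) = Some (gamma r)).
  by exists r0 => r _; apply: val_a_sub.
have [r [lt_r0r le_e]] := frequently_val_sub_le HG HvL Hvi gamma_increasing Has HI
  eventually_const_val_s_sub c r0.
rewrite ve /= in le_g le_e.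
have le_g' : (g' <= al + gamma r *+ i)%O.
  exact: le_trans le_g (og_lerD2l HG al (og_lerMn HG i le_e)).
have [-> | neq] := eqVneq g' (al + gamma r *+ i).
  by exists (R_at_s r); apply: HR.
apply: (val_sub_downward HG HvL Hvi _ _ _ _ HvG (HR r lt_r0r)).
by rewrite lt_neqAle neq.
Qed.

End TranscendentalPseudolimit.

Theorem lemma4p4 (G : porderZmodType) (K L : fieldType)
  (vK : K -> option G) (vL : L -> option G) (iota : {rmorphism K -> L})
  (dI : Order.disp_t) (I : orderType dI) (a : L) (s : I -> K)
  (R : {fraction {poly K}}) (p q : {poly K}) :
  ordered_abgroup G ->
  is_valuation vK -> has_value_group vK ->
  is_valuation vL -> immediate_ext iota vK vL ->
  well_indexed I ->
  ~ (exists x : K, a = iota x) ->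
  pseudocauchy vK s -> transc_type vK s ->
  pseudoconv vL (fun r => iota (s r)) a ->
  ~ (exists c : K, R = tofrac c%:P) ->
  q != 0 -> coprimep p q -> R = tofrac p / tofrac q ->
  let Ra := (map_poly iota p).[a] / (map_poly iota q).[a] in
  let Rs := fun r : I => p.[s r] / q.[s r] in
  let gam := fun r : I => vL (a - iota (s r)) in
  (map_poly iota q).[a] != 0 /\
  exists r0 : I,
    (forall r : I, (r0 < r)%O -> q.[s r] != 0) /\
    pseudoconv vL (fun r => iota (Rs r)) Ra /\
    (exists (al : G) (i : nat), (1 <= i)%N /\
       (exists r1 : I, forall r : I, (r1 < r)%O ->
          vL (iota (Rs r) - Ra) = vadd (Some al) (vnatmul (gam r) i)) /\
       (exists r2 : I,
          (forall r : I, (r2 < r)%O -> exists c : K,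
              vL (Ra - iota c) = vadd (Some al) (vnatmul (gam r) i)) /\
          (forall c : K, exists r : I, (r2 < r)%O /\
              vle (vL (Ra - iota c)) (vadd (Some al) (vnatmul (gam r) i)))) /\
       (forall g : option G,
          (exists c : K, vL (Ra - iota c) = g) <->
          ((exists g' : G, g = Some g') /\
           exists c : K, vle g (vadd (Some al) (vnatmul (vL (a - iota c)) i))))) /\
    pseudocauchy vK Rs /\ divergent vK Rs.
Proof.
move=> HG HvK HvG HvL [Hvi _ _] [_ HI _] Ha _ Htr Hpc HR Hq _ HRpq Ra Rs gam.
have HnC : ~ exists c, p = c *: q.
  move=> [c Ec]; apply: HR; exists c.
  by rewrite HRpq Ec -mul_polyC tofracM mulfK // tofrac_eq0.
have [al [i [i_gt0 HRa]]] := val_R_at_a_sub HG HvK HvL Hvi HI Ha Htr Hpc Hq HnC.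
have inc := eventually_increasing_affine HG al i_gt0 (gamma_increasing HG HvL Ha Hpc).
have Hconst :=
  eventually_const_val_R_at_s_sub HG HvK HvL Hvi HI Ha Htr Hpc (p := p) Hq.
split; first exact: (horner_q_a_neq0 HG HvK HvL Hvi HI Ha Htr Hpc Hq).
have [r0 Hq0] := eventually_horner_q_neq0 HG HvK HvL Hvi HI Ha Htr Hpc Hq.
exists r0; split=> //; split; first exact: (pseudoconv_of_val HG inc HRa).
split; last by split; [exact: (pseudocauchy_of_val HG HvL Hvi inc HRa) |
                      exact: (divergent_of_val HG HvK HI Hconst)].
exists al, i; split=> //; split.
  case: HRa => r1 H; exists r1 => r /H.
  by rewrite /gam (val_a_sub HvL Ha) (val_subC HG HvL).
split; last exact: (val_R_at_a_sub_K HG HvK HvL Hvi HI Ha Htr Hpc Hq i_gt0 HRa HvG).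
case: HRa => r2 H; exists r2; split=> [r /H vr | c].
  by exists (Rs r); rewrite /gam (val_a_sub HvL Ha).
have [r [lt_r2r le_c]] :=
  frequently_val_sub_le HG HvL Hvi inc (ex_intro _ r2 H) HI Hconst c r2.
by exists r; rewrite /gam (val_a_sub HvL Ha).
Qed.
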